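(* Let $\varepsilon>0$, $0<\kappa<1$, and $M\ge0$. Let $\{a_n\}_{n=1}^\infty$ and $\{b_n\}_{n=1}^\infty$ be sequences of positive integers such that $\{a_n\}$ is non-decreasing and $\limsup_{n\to\infty}a_n^{(M+2)^{-n}}=\infty$. Suppose that for all sufficiently large $n$, $a_n\ge n^{1+\varepsilon}$ and $b_n\le 2^{(\log_2 a_n)^\kappa}$. Then for any fixed $0<c<1$, \[\liminf_{N\to\infty}2^{N^2(\log_2 a_{N-1})^c}\Big(\prod_{n=1}^{N-1}a_n\Big)^{M+1}\sum_{n=N}^\infty\Big|\frac{b_n}{a_n}\Big|=0.\] *)

From Stdlib Require Import Reals Lra Lia.
Open Scope R_scope.

Definition log2 (x : R) : R := ln x / ln 2.

Fixpoint prod_from1 (f : nat -> R) (m : nat) : R :=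
  match m with
  | O => 1
  | S k => prod_from1 f k * f (S k)
  end.

(* The quantity whose liminf is considered, with tail sum S = sum_{n>=N} b_n/a_n *)
Definition quantity (a : nat -> nat) (M c : R) (N : nat) (S : R) : R :=
  Rpower 2 (INR N ^ 2 * Rpower (log2 (INR (a (N - 1)%nat))) c)
  * Rpower (prod_from1 (fun n => INR (a n)) (N - 1)) (M + 1) * S.

(* Write lam n = log2 a_n, Phi N = (M+1) (lam 1 + ... + lam (N-1)) and
   Z N = N^2 (lam (N-1))^c, so that the quantity is 2^(Z N + Phi N) times the tail
   sum from N.  Suppose it stays >= delta for all large N.  Since a_n >= n^(1+eps) and
   b_n <= 2^(lam_n^kappa), the tail from N is at most a p-series times
   sup_(m >= N) 2^(lam_m^kappa - lam_m + q log2 m), q = 1 + eps/2; hence beyond every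
   large N there is an m with lam_m <= Phi N + Z N + q log2 m + lam_m^kappa + K.
   Jumping from N to m + 1 multiplies Phi by at most (M+2)^(m+1-N), by a second-order
   Bernoulli bound, while all the other terms are O(rho^N) for some rho < M+2.  So the
   invariant Phi N <= Q ((M+2)^N - rho^N) propagates along the jumps, which forces
   lam_n = O((M+2)^n), i.e. a_n^((M+2)^-n) stays bounded: this contradicts the limsup
   hypothesis. *)

From Stdlib Require Import Reals Lra Lia Classical.
Open Scope R_scope.

(** * Logarithms and real powers *)

Lemma ln_le (x y : R) : 0 < x -> x <= y -> ln x <= ln y.
Proof.
  intros Hx Hxy; destruct (Req_dec x y) as [<-|Hne]; [lra|].
  apply Rlt_le, ln_increasing; lra.
Qed.

Lemma ln_le_sub_1 (y : R) : 0 < y -> ln y <= y - 1.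
Proof. intros Hy; pose proof (exp_ineq1_le (ln y)); rewrite exp_ln in *; lra. Qed.

Lemma ln2_pos : 0 < ln 2.
Proof. rewrite <- ln_1; apply ln_increasing; lra. Qed.

Lemma Rpower2_log2 (x : R) : 0 < x -> Rpower 2 (log2 x) = x.
Proof.
  intros Hx; unfold Rpower, log2.
  replace (ln x / ln 2 * ln 2) with (ln x) by (field; apply Rgt_not_eq, ln2_pos).
  now apply exp_ln.
Qed.

Lemma log2_Rpower (x y : R) : log2 (Rpower x y) = y * log2 x.
Proof. unfold log2; rewrite ln_Rpower; unfold Rdiv; ring. Qed.

Lemma log2_le (x y : R) : 0 < x -> x <= y -> log2 x <= log2 y.
Proof.
  intros Hx Hxy; unfold log2, Rdiv.
  apply Rmult_le_compat_r; [apply Rlt_le, Rinv_0_lt_compat, ln2_pos | now apply ln_le].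
Qed.

Lemma log2_1 : log2 1 = 0.
Proof. unfold log2; rewrite ln_1; unfold Rdiv; ring. Qed.

Lemma log2_nonneg (x : R) : 1 <= x -> 0 <= log2 x.
Proof. intros Hx; rewrite <- log2_1; apply log2_le; lra. Qed.

Lemma Rpower2_sub_log2 (T q x : R) : 0 < x ->
  Rpower 2 (T - q * log2 x) = Rpower 2 T * Rpower x (- q).
Proof.
  intros Hx; unfold Rminus; rewrite Rpower_plus; f_equal.
  rewrite <- (Rpower2_log2 x) at 2 by exact Hx.
  now rewrite Rpower_mult, Ropp_mult_distr_l, Rmult_comm.
Qed.

Lemma log2_INR_le (m n k : nat) :
  (0 < m)%nat -> (m <= n * 2 ^ k)%nat -> log2 (INR m) <= log2 (INR n) + INR k.
Proof.
  intros Hm Hmn.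
  assert (Hn : (0 < n)%nat) by (destruct n; lia).
  assert (Hlog : log2 (INR (n * 2 ^ k)) = log2 (INR n) + INR k).
  { rewrite mult_INR, pow_INR; unfold log2, Rdiv.
    replace (INR 2) with 2 by (simpl; lra).
    rewrite ln_mult, ln_pow by (try apply pow_lt; try apply lt_0_INR; lia || lra).
    field; apply Rgt_not_eq, ln2_pos. }
  rewrite <- Hlog; apply log2_le; [apply lt_0_INR; lia | apply le_INR; lia].
Qed.

Lemma le_mul_pow2_sub (N m : nat) : (1 <= N)%nat -> (N <= m)%nat -> (m <= N * 2 ^ (m - N))%nat.
Proof.
  intros HN Hm; pose proof (Nat.pow_gt_lin_r 2 (m - N) ltac:(lia)).
  assert (N * (m - N + 1) <= N * 2 ^ (m - N))%nat by (apply Nat.mul_le_mono_l; lia).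
  nia.
Qed.

Lemma Rpower_pos (x y : R) : 0 < Rpower x y.
Proof. apply exp_pos. Qed.

(* [ln] is [0] on nonpositive reals, so [Rpower 0 y] is the junk value [exp 0]. *)
Lemma Rpower_0_l (y : R) : Rpower 0 y = 1.
Proof.
  assert (Hln0 : ln 0 = 0) by (unfold ln; destruct (Rlt_dec 0 0); [exfalso; lra | reflexivity]).
  unfold Rpower; now rewrite Hln0, Rmult_0_r, exp_0.
Qed.

Lemma Rpower_ge_1 (x y : R) : 1 <= x -> 0 <= y -> 1 <= Rpower x y.
Proof. intros Hx Hy; rewrite <- (Rpower_O x) by lra; now apply Rle_Rpower. Qed.

Lemma Rpower_le_compat (z w k p : R) :
  0 <= z <= w -> 1 <= w -> 0 <= k <= p -> Rpower z k <= Rpower w p.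
Proof.
  intros Hz Hw Hk; apply Rle_trans with (Rpower w k); [|apply Rle_Rpower; lra].
  destruct (Req_dec z 0) as [->|Hz0].
  - rewrite Rpower_0_l; apply Rpower_ge_1; lra.
  - apply Rle_Rpower_l; lra.
Qed.

Lemma Rpower_mult_pow (y r p : R) (N : nat) :
  0 < y -> 0 < r -> Rpower (y * r ^ N) p = Rpower y p * Rpower r p ^ N.
Proof.
  intros Hy Hr.
  rewrite <- Rpower_mult_distr by (try apply pow_lt; lra).
  rewrite <- !Rpower_pow, !Rpower_mult by (try apply Rpower_pos; lra).
  now rewrite (Rmult_comm (INR N)).
Qed.

Lemma Rpower2_neg_mul_lt (B delta K : R) :
  0 < B -> 0 < delta -> log2 (B / delta) < K -> Rpower 2 (- K) * B < delta.
Proof.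
  intros HB Hdelta HK.
  assert (Hlt : B / delta < Rpower 2 K).
  { rewrite <- (Rpower2_log2 (B / delta)) by (apply Rdiv_lt_0_compat; lra).
    apply Rpower_lt; lra. }
  pose proof (Rpower_pos 2 K); rewrite Rpower_Ropp.
  apply Rmult_lt_reg_l with (Rpower 2 K); [lra|].
  rewrite <- Rmult_assoc, Rinv_r by lra.
  apply Rmult_lt_reg_r with (/ delta); [apply Rinv_0_lt_compat; lra|].
  rewrite (Rmult_assoc (Rpower 2 K)), Rinv_r by lra; unfold Rdiv in Hlt; lra.
Qed.

Lemma Rpower_sublinear (k : R) : 0 <= k < 1 -> forall eta, 0 < eta ->
  exists C, 0 < C /\ forall z, 0 <= z -> Rpower z k <= eta * z + C.
Proof.
  intros Hk eta Heta.
  (* [z ^ k = eta * z] at [z = z0]; beyond [z0] the linear term wins. *)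
  set (z0 := Rpower eta (- / (1 - k))).
  exists (Rpower z0 k + 1); split; [pose proof (Rpower_pos z0 k); lra|].
  intros z Hz; destruct (Req_dec z 0) as [->|Hz0].
  { rewrite Rpower_0_l; pose proof (Rpower_pos z0 k); lra. }
  destruct (Rle_dec z z0) as [Hle|Hgt].
  - assert (Rpower z k <= Rpower z0 k) by (apply Rle_Rpower_l; lra).
    nra.
  - assert (0 < z0) by apply Rpower_pos.
    assert (Hgap : / eta <= Rpower z (1 - k)).
    { replace (/ eta) with (Rpower z0 (1 - k)).
      - apply Rle_Rpower_l; lra.
      - unfold z0; rewrite Rpower_mult.
        replace (- / (1 - k) * (1 - k)) with (Ropp 1) by (field; lra).
        now rewrite Rpower_Ropp, Rpower_1 by lra. }
    assert (Hsplit : Rpower z k * Rpower z (1 - k) = z).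
    { rewrite <- Rpower_plus; replace (k + (1 - k)) with 1 by ring; apply Rpower_1; lra. }
    assert (1 <= eta * Rpower z (1 - k)).
    { apply Rmult_le_compat_l with (r := eta) in Hgap; [|lra].
      now rewrite Rinv_r in Hgap by lra. }
    pose proof (Rpower_pos z k); pose proof (Rpower_pos z0 k).
    nra.
Qed.

(** * Polynomial versus geometric growth *)

Lemma INR_sub_1_mul_nonneg (j : nat) : 0 <= INR j * (INR j - 1).
Proof. destruct j; [simpl; lra|]. rewrite S_INR; pose proof (pos_INR j); nra. Qed.

Lemma pow_ge_second_order (d : R) (j : nat) : 0 <= d ->
  1 + INR j * d + INR j * (INR j - 1) / 2 * d ^ 2 <= (1 + d) ^ j.
Proof.
  intros Hd; induction j as [|j IH]; [simpl; lra|].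
  rewrite S_INR; simpl pow.
  assert (0 <= INR j) by apply pos_INR.
  pose proof (INR_sub_1_mul_nonneg j).
  assert (0 <= INR j * (INR j - 1) / 2 * d ^ 3) by (apply Rmult_le_pos; [lra | apply pow_le; lra]).
  pose proof (Rmult_le_compat_l (1 + d) _ _ ltac:(lra) IH).
  nra.
Qed.

Lemma sq_le_geom (g : R) : 1 < g -> exists G, 0 < G /\ forall N : nat, INR N ^ 2 <= G * g ^ N.
Proof.
  intros Hg; set (d := g - 1); assert (Hd : 0 < d) by (unfold d; lra).
  exists (2 / d ^ 2 + 1 / d); split.
  { assert (0 < 2 / d ^ 2) by (apply Rdiv_lt_0_compat; [lra | apply pow_lt; lra]).
    assert (0 < 1 / d) by (apply Rdiv_lt_0_compat; lra). lra. }
  intros N.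
  pose proof (pow_ge_second_order d N (Rlt_le _ _ Hd)) as Hb.
  replace (1 + d) with g in Hb by (unfold d; ring).
  pose proof (INR_sub_1_mul_nonneg N); pose proof (pos_INR N).
  assert (0 <= INR N * (INR N - 1) / 2 * d ^ 2) by (apply Rmult_le_pos; [lra | apply pow_le; lra]).
  assert (Hsq : INR N * (INR N - 1) <= 2 / d ^ 2 * g ^ N).
  { apply Rmult_le_reg_r with (d ^ 2); [apply pow_lt; lra|].
    replace (2 / d ^ 2 * g ^ N * d ^ 2) with (2 * g ^ N) by (field; lra).
    assert (0 <= INR N * d) by (apply Rmult_le_pos; lra). lra. }
  assert (Hlin : INR N <= 1 / d * g ^ N).
  { apply Rmult_le_reg_r with d; [lra|].
    replace (1 / d * g ^ N * d) with (g ^ N) by (field; lra). lra. }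
  replace (INR N ^ 2) with (INR N * (INR N - 1) + INR N) by ring; lra.
Qed.

Lemma sq_Rpower_le_geom (r p rho : R) :
  1 <= r -> 0 <= p < 1 -> Rpower r p < rho -> forall eta, 0 < eta ->
  exists C, 0 <= C /\ forall (N : nat) (y : R), 1 <= y ->
    INR N ^ 2 * Rpower (y * r ^ N) p <= (eta * y + C) * rho ^ N.
Proof.
  intros Hr Hp Hrho eta Heta.
  set (s := Rpower r p).
  assert (Hs : 1 <= s) by (apply Rpower_ge_1; lra).
  destruct (sq_le_geom (rho / s)) as [G [HG HGN]].
  { apply Rmult_lt_reg_r with s; [lra|]. unfold Rdiv; rewrite Rmult_assoc, Rinv_l by lra; unfold s; lra. }
  destruct (Rpower_sublinear p Hp (eta / G)) as [C' [HC' HC'le]].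
  { apply Rdiv_lt_0_compat; lra. }
  exists (G * C'); split; [nra|].
  intros N y Hy.
  rewrite Rpower_mult_pow by lra; fold s.
  assert (Hrho_pow : rho ^ N = (rho / s) ^ N * s ^ N).
  { rewrite <- Rpow_mult_distr; f_equal; field; lra. }
  specialize (HC'le y ltac:(lra)); specialize (HGN N).
  assert (0 <= s ^ N) by (apply pow_le; lra).
  assert (0 <= INR N ^ 2) by (apply pow_le, pos_INR).
  pose proof (Rpower_pos y p).
  assert (Hfac : INR N ^ 2 * s ^ N <= G * rho ^ N).
  { rewrite Hrho_pow, <- Rmult_assoc; now apply Rmult_le_compat_r. }
  replace ((eta * y + G * C') * rho ^ N) with ((eta / G * y + C') * (G * rho ^ N)) by (field; lra).
  replace (INR N ^ 2 * (Rpower y p * s ^ N)) with (Rpower y p * (INR N ^ 2 * s ^ N)) by ring.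
  apply Rmult_le_compat; nra.
Qed.

(** * Series *)

Lemma Rpower_neg_telescope (s x : R) : 0 < s -> 0 < x ->
  s * Rpower (x + 1) (- (s + 1)) <= Rpower x (- s) - Rpower (x + 1) (- s).
Proof.
  intros Hs Hx; unfold Rpower.
  set (u := ln x); set (v := ln (x + 1)).
  assert (Hvu : 1 / (x + 1) <= v - u).
  { assert (Hq : 0 < x / (x + 1)) by (apply Rdiv_lt_0_compat; lra).
    pose proof (ln_le_sub_1 _ Hq) as Hl.
    unfold Rdiv in Hl; rewrite ln_mult, ln_Rinv in Hl by (try apply Rinv_0_lt_compat; lra).
    replace (x * / (x + 1) - 1) with (- (1 / (x + 1))) in Hl by (field; lra).
    unfold u, v; lra. }
  assert (Hlead : exp (- (s + 1) * v) = exp (- s * v) * (1 / (x + 1))).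
  { replace (- (s + 1) * v) with (- s * v + - v) by ring.
    rewrite exp_plus, exp_Ropp; unfold v; rewrite exp_ln by lra; field; lra. }
  assert (Hgap : exp (- s * u) = exp (- s * v) * exp (s * (v - u))).
  { rewrite <- exp_plus; f_equal; ring. }
  pose proof (exp_ineq1_le (s * (v - u))).
  pose proof (exp_pos (- s * v)).
  assert (s * (1 / (x + 1)) <= s * (v - u)) by (apply Rmult_le_compat_l; lra).
  rewrite Hlead, Hgap; nra.
Qed.

Lemma sum_Rpower_neg_le (q : R) (N : nat) : 1 < q -> (1 <= N)%nat -> forall n,
  sum_f_R0 (fun k => Rpower (INR (N + k)) (- q)) n <= q / (q - 1).
Proof.
  intros Hq HN n.
  assert (Htel : (q - 1) * sum_f_R0 (fun k => Rpower (INR (N + k)) (- q)) n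
                 + Rpower (INR (N + n)) (- (q - 1))
                 <= (q - 1) * Rpower (INR N) (- q) + Rpower (INR N) (- (q - 1))).
  { induction n as [|n IH]; simpl sum_f_R0; [rewrite Nat.add_0_r; lra|].
    replace (N + S n)%nat with (S (N + n)) by lia; rewrite S_INR.
    pose proof (Rpower_neg_telescope (q - 1) (INR (N + n)) ltac:(lra)
                  ltac:(apply lt_0_INR; lia)) as Ht.
    replace (q - 1 + 1) with q in Ht by ring.
    lra. }
  assert (HN1 : 1 <= INR N) by (apply (le_INR 1); lia).
  assert (Hle1 : forall t, 0 <= t -> Rpower (INR N) (- t) <= 1).
  { intros t Ht; rewrite <- (Rpower_O (INR N)) by lra; apply Rle_Rpower; lra. }
  pose proof (Hle1 q ltac:(lra)); pose proof (Hle1 (q - 1) ltac:(lra)).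
  pose proof (Rpower_pos (INR (N + n)) (- (q - 1))).
  apply Rmult_le_reg_l with (q - 1); [lra|].
  replace ((q - 1) * (q / (q - 1))) with q by (field; lra).
  nra.
Qed.

Lemma infinite_sum_le (u : nat -> R) (B S : R) :
  (forall n, sum_f_R0 u n <= B) -> infinite_sum u S -> S <= B.
Proof.
  intros Hle HS; apply Rnot_lt_le; intros HBS.
  destruct (HS (S - B) ltac:(lra)) as [n Hn].
  specialize (Hn n (Nat.le_refl n)); specialize (Hle n).
  unfold R_dist in Hn; apply Rabs_def2 in Hn; lra.
Qed.

Lemma infinite_sum_exists (u : nat -> R) (B : R) :
  (forall k, 0 <= u k) -> (forall n, sum_f_R0 u n <= B) -> exists S, infinite_sum u S.
Proof.
  intros Hpos Hle.
  destruct (growing_cv (sum_f_R0 u)) as [S HS].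
  - intros n; simpl; pose proof (Hpos (S n)); lra.
  - exists B; intros x [n ->]; apply Hle.
  - now exists S.
Qed.

(** * The growth recursion *)

Fixpoint sum_from1 (f : nat -> R) (m : nat) : R :=
  match m with
  | O => 0
  | S k => sum_from1 f k + f (S k)
  end.

Lemma prod_from1_pos (f : nat -> R) (n : nat) :
  (forall i, (1 <= i)%nat -> 0 < f i) -> 0 < prod_from1 f n.
Proof.
  intros Hf; induction n as [|n IH]; simpl; [lra|].
  apply Rmult_lt_0_compat; [exact IH | apply Hf; lia].
Qed.

Lemma log2_prod_from1 (f : nat -> R) (n : nat) : (forall i, (1 <= i)%nat -> 0 < f i) ->
  log2 (prod_from1 f n) = sum_from1 (fun i => log2 (f i)) n.
Proof.
  intros Hf; induction n as [|n IH]; simpl.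
  - apply log2_1.
  - rewrite <- IH; unfold log2, Rdiv.
    rewrite ln_mult; [ring | now apply prod_from1_pos | apply Hf; lia].
Qed.

Lemma sum_from1_nonneg (f : nat -> R) (n : nat) :
  (forall i, (1 <= i)%nat -> 0 <= f i) -> 0 <= sum_from1 f n.
Proof.
  intros Hf; induction n as [|n IH]; simpl; [lra|].
  pose proof (Hf (S n) ltac:(lia)); lra.
Qed.

Lemma sum_from1_add_le (f : nat -> R) (n j : nat) :
  (forall i, (1 <= i)%nat -> f i <= f (S i)) ->
  sum_from1 f (n + j) <= sum_from1 f n + INR j * f (n + j)%nat.
Proof.
  intros Hf; induction j as [|j IH].
  - rewrite Nat.add_0_r; simpl; lra.
  - replace (n + S j)%nat with (S (n + j)) by lia; simpl sum_from1; rewrite S_INR.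
    destruct j as [|j].
    + rewrite Nat.add_0_r in *; simpl in *; lra.
    + pose proof (Hf (n + S j)%nat ltac:(lia)); pose proof (pos_INR (S j)); nra.
Qed.

Lemma exists_affine_le (A b theta B : R) : b < theta ->
  exists Q, 1 <= Q /\ B <= Q /\ A + b * Q <= theta * Q.
Proof.
  intros Hb; set (Q := Rmax 1 (Rmax B (A / (theta - b)))).
  pose proof (Rmax_l 1 (Rmax B (A / (theta - b)))).
  pose proof (Rmax_r 1 (Rmax B (A / (theta - b)))).
  pose proof (Rmax_l B (A / (theta - b))); pose proof (Rmax_r B (A / (theta - b))).
  exists Q; repeat split; try (unfold Q; lra).
  assert (A <= (theta - b) * Q); [|lra].
  replace A with ((theta - b) * (A / (theta - b))) by (field; lra).
  apply Rmult_le_compat_l; unfold Q; lra.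
Qed.

Lemma block_growth_le (M q F E L F' : R) (j : nat) :
  0 <= M -> 0 <= q -> 0 <= F -> 0 <= E ->
  F' <= F + (M + 1) * INR j * L -> L <= F + E + q * (INR j - 1) ->
  F' <= (M + 2) ^ j * (F + E + 2 * q).
Proof.
  intros HM Hq HF HE HF' HL.
  pose proof (pow_ge_second_order (M + 1) j ltac:(lra)) as Hu.
  replace (1 + (M + 1)) with (M + 2) in Hu by ring.
  set (u := (M + 2) ^ j) in *.
  pose proof (pos_INR j); pose proof (INR_sub_1_mul_nonneg j).
  assert (HMj : 0 <= (M + 1) * INR j) by nra.
  assert (Hsq : (M + 1) * (INR j * (INR j - 1)) <= 2 * u).
  { assert ((M + 1) * (INR j * (INR j - 1)) <= (M + 1) ^ 2 * (INR j * (INR j - 1))) by nra.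
    assert (0 <= INR j * (M + 1)) by nra. nra. }
  assert (HF'2 : F' <= F * (1 + (M + 1) * INR j) + (M + 1) * INR j * E
                       + q * ((M + 1) * (INR j * (INR j - 1)))).
  { assert ((M + 1) * INR j * L <= (M + 1) * INR j * (F + E + q * (INR j - 1)))
      by (apply Rmult_le_compat_l; lra).
    nra. }
  assert (F * (1 + (M + 1) * INR j) <= F * u) by (apply Rmult_le_compat_l; nra).
  assert ((M + 1) * INR j * E <= u * E) by (apply Rmult_le_compat_r; nra).
  assert (q * ((M + 1) * (INR j * (INR j - 1))) <= q * (2 * u)) by (apply Rmult_le_compat_l; lra).
  nra.
Qed.

Lemma geom_gap_le (Q r rho : R) (N j : nat) : 0 <= Q -> 0 < rho <= r -> (1 <= j)%nat ->
  r ^ j * (Q * (r ^ N - rho ^ N) + (1 - rho / r) * Q * rho ^ N)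
  <= Q * (r ^ (N + j) - rho ^ (N + j)).
Proof.
  intros HQ Hrho Hj; destruct j as [|j]; [lia|].
  rewrite !pow_add; simpl pow.
  assert (rho ^ j <= r ^ j) by (apply pow_incr; lra).
  assert (0 <= rho ^ N) by (apply pow_le; lra).
  replace (r * r ^ j * (Q * (r ^ N - rho ^ N) + (1 - rho / r) * Q * rho ^ N))
    with (Q * (r ^ N * (r * r ^ j)) - Q * rho ^ N * (rho * r ^ j)) by (field; lra).
  assert (Q * rho ^ N * (rho * rho ^ j) <= Q * rho ^ N * (rho * r ^ j)).
  { apply Rmult_le_compat_l; [nra|]. apply Rmult_le_compat_l; lra. }
  nra.
Qed.

Lemma eps_split (eps : R) : 0 < eps ->
  0 < eps / (2 * (1 + eps)) < 1 /\ 1 + eps / 2 = (1 - eps / (2 * (1 + eps))) * (1 + eps).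
Proof.
  intros Heps; split; [split|].
  - apply Rdiv_lt_0_compat; lra.
  - apply Rmult_lt_reg_r with (2 * (1 + eps)); [lra|].
    unfold Rdiv; rewrite Rmult_assoc, Rinv_l; lra.
  - field; lra.
Qed.

Section Growth.

Variables (lam : nat -> R) (eps M c kappa K : R) (N2 : nat).
Hypotheses (heps : 0 < eps) (hM : 0 <= M) (hc : 0 <= c < 1) (hkappa : 0 <= kappa < 1)
  (hK : 0 <= K) (hN2 : (2 <= N2)%nat).
Hypothesis lam_nonneg : forall n, (1 <= n)%nat -> 0 <= lam n.
Hypothesis lam_mono : forall n, (1 <= n)%nat -> lam n <= lam (S n).
Hypothesis lam_log2_ge : forall n, (N2 <= n)%nat -> (1 + eps) * log2 (INR n) <= lam n.

Let q := 1 + eps / 2.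
Let e := eps / (2 * (1 + eps)).
Let r := M + 2.
Let Phi N := (M + 1) * sum_from1 lam (N - 1).
Let Z N := INR N ^ 2 * Rpower (lam (N - 1)) c.

Hypothesis exists_lam_le : forall N, (N2 <= N)%nat ->
  exists m, (N <= m)%nat /\ lam m <= K + Phi N + Z N + q * log2 (INR m) + Rpower (lam m) kappa.

Let p := Rmax c kappa.
Let rho := Rpower r ((1 + p) / 2).
Let theta := 1 - rho / r.

Lemma e_bounds : 0 < e < 1 /\ q = (1 - e) * (1 + eps).
Proof. exact (eps_split eps heps). Qed.

Lemma p_bounds : 0 <= p < 1 /\ c <= p /\ kappa <= p.
Proof.
  unfold p; pose proof (Rmax_l c kappa); pose proof (Rmax_r c kappa).
  repeat split; try lra. apply Rmax_lub_lt; lra.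
Qed.

Lemma rho_bounds : Rpower r p < rho /\ 1 <= rho < r.
Proof.
  destruct p_bounds as [Hp _]; assert (Hr : 1 < r) by (unfold r; lra).
  unfold rho; repeat split.
  - apply Rpower_lt; lra.
  - apply Rpower_ge_1; lra.
  - rewrite <- (Rpower_1 r) at 2 by lra; apply Rpower_lt; lra.
Qed.

Lemma theta_bounds : 0 < theta <= 1.
Proof.
  destruct rho_bounds as [_ [Hrho1 Hrho2]]; unfold theta.
  assert (0 < rho / r < 1); [|lra].
  split; [apply Rdiv_lt_0_compat; lra|].
  apply Rmult_lt_reg_r with r; [lra|]; unfold Rdiv; rewrite Rmult_assoc, Rinv_l; lra.
Qed.

Lemma lam_le (n m : nat) : (1 <= n)%nat -> (n <= m)%nat -> lam n <= lam m.
Proof.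
  intros Hn Hnm; induction Hnm as [|m Hnm IH]; [lra|].
  pose proof (lam_mono m ltac:(lia)); lra.
Qed.

Lemma Phi_nonneg N : 0 <= Phi N.
Proof. unfold Phi; pose proof (sum_from1_nonneg lam (N - 1) lam_nonneg); nra. Qed.

Lemma Z_nonneg N : 0 <= Z N.
Proof.
  unfold Z; pose proof (pow_le (INR N) 2 (pos_INR N)); pose proof (Rpower_pos (lam (N - 1)) c).
  nra.
Qed.

Lemma lam_pred_le_Phi N : (2 <= N)%nat -> lam (N - 1) <= Phi N.
Proof.
  intros HN; unfold Phi; replace (N - 1)%nat with (S (N - 2)) by lia; simpl sum_from1.
  pose proof (sum_from1_nonneg lam (N - 2) lam_nonneg); pose proof (lam_nonneg (S (N - 2)) ltac:(lia)).
  nra.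
Qed.

Lemma Phi_add_le N j : (1 <= N)%nat ->
  Phi (N + j) <= Phi N + (M + 1) * INR j * lam (N - 1 + j)%nat.
Proof.
  intros HN; unfold Phi; replace (N + j - 1)%nat with (N - 1 + j)%nat by lia.
  pose proof (sum_from1_add_le lam (N - 1) j lam_mono); nra.
Qed.

Section Invariant.

Variables (C1 eta C Q : R).
Hypotheses (hC1 : 0 <= C1) (heta : 0 <= eta) (hC : 0 <= C) (hQ1 : 1 <= Q).
Hypothesis kappa_sublinear : forall z, 0 <= z -> Rpower z kappa <= e / 2 * z + C1.
Hypothesis sq_Rpower_le : forall (N : nat) (y : R), 1 <= y ->
  INR N ^ 2 * Rpower (y * r ^ N) p <= (eta * y + C) * rho ^ N.

Let X := 2 / e * (K + C1 + C + (1 + eta) * Q).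

Hypothesis hQ : K + 2 * q + q * (eta + C) + 2 * C + eta * X + eta * Q <= theta * Q.

Let Good N := (N2 <= N)%nat /\ Phi N <= Q * (r ^ N - rho ^ N).

Lemma pow_bounds N : 1 <= rho ^ N <= r ^ N /\ 1 <= r ^ N.
Proof.
  destruct rho_bounds as [_ Hrho]; repeat split.
  - apply pow_R1_Rle; lra.
  - apply pow_incr; lra.
  - apply pow_R1_Rle; unfold r; lra.
Qed.

Lemma X_ge_1 : 1 <= X.
Proof.
  destruct e_bounds as [[He0 He1] _].
  assert (2 <= 2 / e).
  { apply Rmult_le_reg_r with e; [lra|]. unfold Rdiv; rewrite Rmult_assoc, Rinv_l; lra. }
  assert (1 <= K + C1 + C + (1 + eta) * Q) by nra.
  unfold X; nra.
Qed.

Lemma Phi_le_Good N : Good N -> Phi N <= Q * r ^ N.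
Proof. intros [_ HPhi]; destruct (pow_bounds N) as [[H1 _] _]; nra. Qed.

Lemma Z_le N : Good N -> Z N <= (eta * Q + C) * rho ^ N.
Proof.
  intros HG; pose proof (Phi_le_Good N HG) as HPhi; destruct HG as [HN _].
  destruct p_bounds as [Hp [Hcp _]]; destruct (pow_bounds N) as [_ Hr].
  pose proof (lam_pred_le_Phi N ltac:(lia)); pose proof (lam_nonneg (N - 1) ltac:(lia)).
  eapply Rle_trans; [|apply sq_Rpower_le; lra].
  apply Rmult_le_compat_l; [apply pow_le, pos_INR|].
  apply Rpower_le_compat; nra.
Qed.

Lemma log2_le_geom N : (1 <= N)%nat -> log2 (INR N) <= (eta + C) * rho ^ N.
Proof.
  intros HN; destruct p_bounds as [Hp _]; destruct (pow_bounds N) as [_ Hr].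
  pose proof (log2_INR_le N 1 N ltac:(lia) ltac:(pose proof (Nat.pow_gt_lin_r 2 N); lia)) as Hlog.
  simpl INR in Hlog at 2; rewrite log2_1 in Hlog.
  replace (eta + C) with (eta * 1 + C) by ring.
  eapply Rle_trans; [|apply (sq_Rpower_le N 1); lra].
  rewrite Rmult_1_l.
  assert (HN1 : 1 <= INR N) by (apply (le_INR 1); lia).
  pose proof (Rpower_ge_1 (r ^ N) p Hr ltac:(lra)).
  nra.
Qed.

Lemma lam_le_X_pow N m : Good N -> (N <= m)%nat ->
  lam m <= K + Phi N + Z N + q * log2 (INR m) + Rpower (lam m) kappa ->
  lam m <= X * r ^ N.
Proof.
  intros HG Hm Hret.
  destruct e_bounds as [[He0 He1] Hq]; destruct (pow_bounds N) as [[Hrho1 Hrho] Hr].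
  pose proof (Phi_le_Good N HG); pose proof (Z_le N HG); destruct HG as [HN _].
  pose proof (lam_nonneg m ltac:(lia)) as Hm0.
  pose proof (kappa_sublinear _ Hm0).
  assert (q * log2 (INR m) <= (1 - e) * lam m).
  { rewrite Hq, Rmult_assoc; apply Rmult_le_compat_l; [lra | apply lam_log2_ge; lia]. }
  assert (Hcrude : e / 2 * lam m <= (K + C1 + C + (1 + eta) * Q) * r ^ N).
  { assert ((eta * Q + C) * rho ^ N <= (eta * Q + C) * r ^ N) by (apply Rmult_le_compat_l; nra).
    nra. }
  unfold X; apply Rmult_le_reg_l with (e / 2); [lra|].
  replace (e / 2 * (2 / e * (K + C1 + C + (1 + eta) * Q) * r ^ N))
    with ((K + C1 + C + (1 + eta) * Q) * r ^ N) by (field; lra).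
  exact Hcrude.
Qed.

Lemma Rpower_lam_le N m : (1 <= N)%nat -> (1 <= m)%nat -> lam m <= X * r ^ N ->
  Rpower (lam m) kappa <= (eta * X + C) * rho ^ N.
Proof.
  intros HN Hm Hlam; destruct p_bounds as [Hp [_ Hkp]]; destruct (pow_bounds N) as [_ Hr].
  pose proof X_ge_1; pose proof (lam_nonneg m Hm).
  eapply Rle_trans; [|apply sq_Rpower_le; lra].
  assert (1 <= INR N ^ 2) by (apply pow_R1_Rle, (le_INR 1); lia).
  pose proof (Rpower_pos (X * r ^ N) p).
  assert (Rpower (lam m) kappa <= Rpower (X * r ^ N) p) by (apply Rpower_le_compat; nra).
  nra.
Qed.

Lemma error_le_theta_pow N m : Good N -> (N <= m)%nat -> lam m <= X * r ^ N ->
  K + Z N + q * log2 (INR N) + Rpower (lam m) kappa + 2 * q <= theta * Q * rho ^ N.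
Proof.
  intros HG Hm Hlam; destruct (pow_bounds N) as [[Hrho1 _] _].
  pose proof (Z_le N HG); destruct HG as [HN _].
  pose proof (log2_le_geom N ltac:(lia)).
  pose proof (Rpower_lam_le N m ltac:(lia) ltac:(lia) Hlam).
  assert (Hq : 0 <= q) by (unfold q; lra).
  assert (q * log2 (INR N) <= q * ((eta + C) * rho ^ N)) by (apply Rmult_le_compat_l; lra).
  assert ((K + 2 * q) * 1 <= (K + 2 * q) * rho ^ N) by (apply Rmult_le_compat_l; lra).
  assert ((K + 2 * q + q * (eta + C) + 2 * C + eta * X + eta * Q) * rho ^ N
          <= theta * Q * rho ^ N) by (apply Rmult_le_compat_r; lra).
  nra.
Qed.

Lemma Good_step N : Good N -> exists m, (N <= m)%nat /\ Good (S m) /\ lam m <= X * r ^ N.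
Proof.
  intros HG; pose proof HG as [HN HPhi].
  destruct (exists_lam_le N HN) as [m [Hm Hret]].
  pose proof (lam_le_X_pow N m HG Hm Hret) as Hcrude.
  pose proof (error_le_theta_pow N m HG Hm Hcrude) as Herr.
  set (j := (m - N + 1)%nat).
  set (E := K + Z N + q * log2 (INR N) + Rpower (lam m) kappa) in Herr.
  assert (Hq : 0 <= q) by (unfold q; lra).
  assert (HE : 0 <= E).
  { assert (0 <= log2 (INR N)) by (apply log2_nonneg, (le_INR 1); lia).
    pose proof (Z_nonneg N); pose proof (Rpower_pos (lam m) kappa).
    unfold E; nra. }
  assert (Hlog : log2 (INR m) <= log2 (INR N) + (INR j - 1)).
  { replace (INR j - 1) with (INR (m - N)) by (unfold j; rewrite plus_INR; simpl; lra).
    apply log2_INR_le, le_mul_pow2_sub; lia. }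
  assert (Href : lam m <= Phi N + E + q * (INR j - 1)).
  { assert (q * log2 (INR m) <= q * (log2 (INR N) + (INR j - 1))) by (apply Rmult_le_compat_l; lra).
    unfold E; nra. }
  assert (Hblock : Phi (N + j) <= Phi N + (M + 1) * INR j * lam m).
  { pose proof (Phi_add_le N j ltac:(lia)) as Hadd.
    now replace (N - 1 + j)%nat with m in Hadd by (unfold j; lia). }
  exists m; split; [lia|]; split; [|exact Hcrude].
  split; [lia|].
  replace (S m) with (N + j)%nat by (unfold j; lia).
  destruct rho_bounds as [_ [Hrho1 Hrho2]]; pose proof (Phi_nonneg N).
  eapply Rle_trans; [exact (block_growth_le M q (Phi N) E (lam m) _ j hM Hq ltac:(lra) HE Hblock Href)|].
  eapply Rle_trans; [|apply geom_gap_le; unfold j; lra || lia].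
  apply Rmult_le_compat_l; [apply pow_le; unfold r; lra|].
  unfold theta in Herr; lra.
Qed.

Lemma Good_lam_le n : forall N, Good N -> (N <= n)%nat -> lam n <= X * r ^ n.
Proof.
  intros N; remember (n - N)%nat as d eqn:Hd; revert N Hd.
  induction d as [d IH] using (well_founded_induction Wf_nat.lt_wf).
  intros N Hd HG HNn.
  destruct (Good_step N HG) as [m [Hm [HGm Hlam]]].
  destruct (Compare_dec.le_lt_dec n m) as [Hnm|Hmn].
  - destruct HG as [HN _]; pose proof X_ge_1; destruct (pow_bounds N) as [_ HrN].
    pose proof (lam_le n m ltac:(lia) Hnm).
    assert (r ^ N <= r ^ n) by (apply Rle_pow; [unfold r; lra | lia]).
    nra.
  - apply (IH (n - S m)%nat) with (N := S m); auto; lia.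
Qed.

End Invariant.

Lemma lam_le_geom : exists X, forall n, (N2 <= n)%nat -> lam n <= X * (M + 2) ^ n.
Proof.
  destruct e_bounds as [[He0 He1] _]; destruct theta_bounds as [Hth0 Hth1].
  destruct p_bounds as [Hp _]; destruct rho_bounds as [Hrp [Hrho1 Hrho2]].
  destruct (Rpower_sublinear kappa hkappa (e / 2) ltac:(lra)) as [C1 [HC1 Hsub]].
  (* Small enough that the coefficient of [Q] in [hQ] stays below [theta]. *)
  set (eta := theta * e / 10).
  assert (Heta : 0 < eta) by (unfold eta; nra).
  assert (Heta_e : eta * (2 / e) = theta / 5) by (unfold eta; field; lra).
  destruct (sq_Rpower_le_geom r p rho ltac:(unfold r; lra) Hp Hrp eta Heta) as [C [HC HsqC]].
  set (den := r ^ N2 - rho ^ N2).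
  assert (Hden : 0 < den).
  { unfold den; replace N2 with (S (N2 - 1)) by lia; simpl pow.
    assert (rho ^ (N2 - 1) <= r ^ (N2 - 1)) by (apply pow_incr; lra).
    pose proof (pow_R1_Rle rho (N2 - 1) Hrho1); nra. }
  destruct (exists_affine_le (K + 2 * q + q * (eta + C) + 2 * C + eta * (2 / e) * (K + C1 + C))
              (eta + eta * (2 / e) * (1 + eta)) theta (Phi N2 / den)) as [Q [HQ1 [HQB HQ]]].
  { rewrite Heta_e; unfold eta; nra. }
  exists (2 / e * (K + C1 + C + (1 + eta) * Q)); intros n Hn.
  apply (Good_lam_le C1 eta C Q) with (N := N2); try lra; auto.
  split; [lia|]; fold den.
  apply Rle_trans with (Phi N2 / den * den); [right; field; lra|].
  apply Rmult_le_compat_r; lra.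
Qed.

End Growth.

(** * Tail sums *)

Section Tail.

Variables (eps kappa M c : R) (a b : nat -> nat) (n1 : nat).
Hypotheses (heps : 0 < eps) (hkappa : 0 <= kappa < 1) (hM : 0 <= M) (hn1 : (1 <= n1)%nat).
Hypothesis ha_pos : forall n, (1 <= n)%nat -> (0 < a n)%nat.
Hypothesis hab : forall n, (n1 <= n)%nat ->
  Rpower (INR n) (1 + eps) <= INR (a n) /\
  INR (b n) <= Rpower 2 (Rpower (log2 (INR (a n))) kappa).

Let lam n := log2 (INR (a n)).
Let q := 1 + eps / 2.
Let u N k := INR (b (N + k)%nat) / INR (a (N + k)%nat).

Lemma a_ge_1 n : (1 <= n)%nat -> 1 <= INR (a n).
Proof. intros Hn; apply (le_INR 1), ha_pos, Hn. Qed.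

Lemma lam_nonneg n : (1 <= n)%nat -> 0 <= lam n.
Proof. intros Hn; apply log2_nonneg, a_ge_1, Hn. Qed.

Lemma lam_log2_ge n : (n1 <= n)%nat -> (1 + eps) * log2 (INR n) <= lam n.
Proof.
  intros Hn; rewrite <- log2_Rpower; apply log2_le; [apply Rpower_pos | apply hab, Hn].
Qed.

Lemma ratio_le_Rpower2 n : (n1 <= n)%nat ->
  INR (b n) / INR (a n) <= Rpower 2 (Rpower (lam n) kappa - lam n).
Proof.
  intros Hn; pose proof (a_ge_1 n ltac:(lia)) as Ha.
  unfold Rminus; rewrite Rpower_plus, Rpower_Ropp; unfold lam; rewrite Rpower2_log2 by lra.
  apply Rmult_le_compat_r; [apply Rlt_le, Rinv_0_lt_compat; lra | apply hab, Hn].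
Qed.

Lemma tail_partial_sum_le T N : (n1 <= N)%nat ->
  (forall m, (N <= m)%nat -> T + q * log2 (INR m) + Rpower (lam m) kappa <= lam m) ->
  forall n, sum_f_R0 (u N) n <= Rpower 2 (- T) * (q / (q - 1)).
Proof.
  intros HN Hgap n.
  apply Rle_trans with (sum_f_R0 (fun k => Rpower (INR (N + k)) (- q) * Rpower 2 (- T)) n).
  - apply sum_Rle; intros k _; unfold u.
    rewrite Rmult_comm, <- Rpower2_sub_log2 by (apply lt_0_INR; lia).
    eapply Rle_trans; [apply ratio_le_Rpower2; lia|].
    apply Rle_Rpower; [lra|]; specialize (Hgap (N + k)%nat ltac:(lia)); lra.
  - rewrite <- scal_sum; apply Rmult_le_compat_l; [apply Rlt_le, Rpower_pos|].
    apply sum_Rpower_neg_le; unfold q; lra || lia.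
Qed.

Lemma tail_summable N : (n1 <= N)%nat -> exists S, infinite_sum (u N) S.
Proof.
  intros HN; destruct (eps_split eps heps) as [[He0 He1] Hq].
  set (e := eps / (2 * (1 + eps))) in *.
  destruct (Rpower_sublinear kappa hkappa e He0) as [C1 [_ Hsub]].
  apply infinite_sum_exists with (Rpower 2 (- - C1) * (q / (q - 1))).
  - intros k; unfold u, Rdiv; apply Rmult_le_pos; [apply pos_INR|].
    apply Rlt_le, Rinv_0_lt_compat, lt_0_INR, ha_pos; lia.
  - apply tail_partial_sum_le; [exact HN|]; intros m Hm.
    pose proof (lam_nonneg m ltac:(lia)); pose proof (Hsub (lam m) ltac:(lra)).
    assert (q * log2 (INR m) <= (1 - e) * lam m).
    { unfold q; rewrite Hq, Rmult_assoc; apply Rmult_le_compat_l; [lra | apply lam_log2_ge; lia]. }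
    lra.
Qed.

Lemma quantity_Rpower2 N S : quantity a M c N S =
  Rpower 2 (INR N ^ 2 * Rpower (lam (N - 1)) c + (M + 1) * sum_from1 lam (N - 1)) * S.
Proof.
  assert (Hpos : forall i, (1 <= i)%nat -> 0 < INR (a i)) by (intros i Hi; pose proof (a_ge_1 i Hi); lra).
  unfold quantity.
  rewrite <- (Rpower2_log2 (prod_from1 _ _)) by (apply prod_from1_pos, Hpos).
  rewrite Rpower_mult, log2_prod_from1 by exact Hpos.
  now rewrite (Rmult_comm (sum_from1 _ _)), <- Rpower_plus.
Qed.

Lemma exists_lam_le_of_quantity_ge delta : 0 < delta -> exists K, 0 <= K /\
  forall N, (n1 <= N)%nat ->
  (forall S, infinite_sum (u N) S -> delta <= quantity a M c N S) ->
  exists m, (N <= m)%nat /\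
    lam m <= K + (M + 1) * sum_from1 lam (N - 1) + INR N ^ 2 * Rpower (lam (N - 1)) c
             + q * log2 (INR m) + Rpower (lam m) kappa.
Proof.
  intros Hdelta; set (B := q / (q - 1)).
  assert (HB : 0 < B) by (unfold B, q; apply Rdiv_lt_0_compat; lra).
  set (K := Rmax 0 (log2 (B / delta)) + 1).
  exists K; split; [pose proof (Rmax_l 0 (log2 (B / delta))); unfold K; lra|].
  intros N HN Hge.
  destruct (tail_summable N HN) as [S HS]; specialize (Hge S HS).
  set (Phi := (M + 1) * sum_from1 lam (N - 1)); set (Z := INR N ^ 2 * Rpower (lam (N - 1)) c).
  apply NNPP; intros Hno.
  assert (Hgap : forall m, (N <= m)%nat ->
            K + Phi + Z + q * log2 (INR m) + Rpower (lam m) kappa <= lam m).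
  { intros m Hm; apply Rlt_le, Rnot_le_lt; intros Hle; apply Hno; exists m; split; [exact Hm | lra]. }
  pose proof (infinite_sum_le _ _ _ (tail_partial_sum_le (K + Phi + Z) N HN
    ltac:(intros m Hm; specialize (Hgap m Hm); lra)) HS) as HSle.
  rewrite quantity_Rpower2 in Hge; fold Phi Z in Hge.
  assert (Hbig : delta <= Rpower 2 (- K) * B).
  { eapply Rle_trans; [exact Hge|].
    apply Rle_trans with (Rpower 2 (Z + Phi) * (Rpower 2 (- (K + Phi + Z)) * B)).
    - apply Rmult_le_compat_l; [apply Rlt_le, Rpower_pos | exact HSle].
    - rewrite <- Rmult_assoc, <- Rpower_plus; right; do 2 f_equal; ring. }
  pose proof (Rpower2_neg_mul_lt B delta K HB Hdelta ltac:(pose proof (Rmax_r 0 (log2 (B / delta))); unfold K; lra)).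
  lra.
Qed.

Lemma Rpower_root_le n X : (1 <= n)%nat -> lam n <= X * (M + 2) ^ n ->
  Rpower (INR (a n)) (/ (M + 2) ^ n) <= Rpower 2 X.
Proof.
  intros Hn Hlam; pose proof (a_ge_1 n Hn).
  assert (Hr : 0 < (M + 2) ^ n) by (apply pow_lt; lra).
  rewrite <- (Rpower2_log2 (INR (a n))), Rpower_mult by lra.
  apply Rle_Rpower; [lra|].
  apply Rmult_le_reg_r with ((M + 2) ^ n); [exact Hr|].
  rewrite Rmult_assoc, Rinv_l by lra; fold (lam n); lra.
Qed.

End Tail.

Theorem lemma1 (eps kappa M : R) (a b : nat -> nat)
  (heps : 0 < eps) (hk0 : 0 < kappa) (hk1 : kappa < 1) (hM : 0 <= M)
  (ha_pos : forall n, (1 <= n)%nat -> (0 < a n)%nat)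
  (hb_pos : forall n, (1 <= n)%nat -> (0 < b n)%nat)
  (ha_mono : forall n, (1 <= n)%nat -> (a n <= a (S n))%nat)
  (hlimsup : forall (K : R) (N : nat), exists n, (N <= n)%nat /\ (1 <= n)%nat /\
       K < Rpower (INR (a n)) (/ (M + 2) ^ n))
  (hevent : exists n0 : nat, forall n, (n0 <= n)%nat -> (1 <= n)%nat ->
       Rpower (INR n) (1 + eps) <= INR (a n) /\
       INR (b n) <= Rpower 2 (Rpower (log2 (INR (a n))) kappa)) :
  forall c : R, 0 < c -> c < 1 ->
  forall (delta : R), 0 < delta -> forall N0 : nat,
    exists N : nat, (N0 <= N)%nat /\ (2 <= N)%nat /\
      exists S : R,
        infinite_sum (fun k => INR (b (N + k)%nat) / INR (a (N + k)%nat)) S /\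
        quantity a M c N S < delta.
Proof.
  intros c hc0 hc1 delta hdelta N0.
  destruct hevent as [n0 hev].
  set (n1 := Nat.max n0 1); set (N2 := Nat.max N0 (Nat.max n1 2)).
  assert (hab : forall n, (n1 <= n)%nat ->
    Rpower (INR n) (1 + eps) <= INR (a n) /\
    INR (b n) <= Rpower 2 (Rpower (log2 (INR (a n))) kappa)) by (intros n Hn; apply hev; lia).
  destruct (exists_lam_le_of_quantity_ge eps kappa M c a b n1 heps ltac:(lra) ltac:(lia) ha_pos hab
              delta hdelta) as [K [HK Hret]].
  apply NNPP; intros Hno.
  destruct (lam_le_geom (fun n => log2 (INR (a n))) eps M c kappa K N2) as [X HX];
    try lra; try lia.
  - apply lam_nonneg, ha_pos.
  - intros n Hn; apply log2_le; [apply lt_0_INR, ha_pos, Hn | apply le_INR, ha_mono, Hn].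
  - intros n Hn; apply (lam_log2_ge eps kappa a b n1 hab); lia.
  - intros N HN; apply Hret; [lia|]; intros S HS.
    apply Rnot_lt_le; intros Hlt; apply Hno; exists N; repeat split; try lia.
    now exists S.
  - destruct (hlimsup (Rpower 2 X) N2) as [n [Hn [Hn1 Hlt]]].
    pose proof (Rpower_root_le M a hM ha_pos n X Hn1 (HX n Hn)); lra.
Qed.
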